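(* Let $X$ be a finite set with $|X|\ge 3$. If $\mathcal T$ is a minimum triplet cover for some tree $T\in B(X)$, then $\mu(\mathcal T)=2$.
   Context: A binary phylogenetic $X$-tree is an unrooted tree whose leaf set is $X$ and all of whose non-leaf vertices are unlabelled of degree three; $B(X)$ is the set of such trees. Pairs in $\binom{X}{2}$ are written $ab$, triples $abc$. Given $\mathcal T\subseteq\binom{X}{2}$, a triple $abc$ supports an interior vertex $v$ if $a,b,c$ lie one in each of the three components of $T$ minus $v$ and $ab,ac,bc\in\mathcal T$; $\mathcal T$ is a triplet cover for $T$ if every interior vertex is supported by some triple; it is minimum if no triplet cover for $T$ has smaller cardinality. The multiplicity $\mu_{\mathcal T}(x)$ of $x\in X$ is the number of elements of $\mathcal T$ containing $x$, and $\mu(\mathcal T)=\min\{\mu_{\mathcal T}(x):x\in X\}$. *)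

From mathcomp Require Import all_boot.
Set Implicit Arguments. Unset Strict Implicit. Unset Printing Implicit Defensive.

Section Trees.
Variables (X V : finType) (e : rel V) (phi : X -> V).

Definition deg (v : V) : nat := #|[set y | e v y]|.

Definition is_tree : Prop :=
  symmetric e /\ irreflexive e /\ (forall x y, connect e x y) /\
  (forall s : seq V, uniq s -> 3 <= size s -> ~~ cycle e s).

Definition binary_Xtree : Prop :=
  is_tree /\ injective phi /\
  (forall v, (deg v == 1) = (v \in codom phi)) /\
  (forall v, v \notin codom phi -> deg v = 3).

Definition interior (v : V) : bool := v \notin codom phi.

Definition same_comp_minus (v x y : V) : bool :=
  connect [rel a b | e a b && (a != v) && (b != v)] x y.

Definition sep_at (v : V) (x y : V) : bool :=
  [&& x != v, y != v & ~~ same_comp_minus v x y].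

Definition is_pairset (Tc : {set {set X}}) : Prop :=
  forall p, p \in Tc -> #|p| = 2.

Definition supports (Tc : {set {set X}}) (a b c : X) (v : V) : bool :=
  [&& sep_at v (phi a) (phi b), sep_at v (phi a) (phi c), sep_at v (phi b) (phi c),
      [set a; b] \in Tc, [set a; c] \in Tc & [set b; c] \in Tc].

Definition triplet_cover (Tc : {set {set X}}) : Prop :=
  is_pairset Tc /\
  forall v, interior v -> exists a b c, supports Tc a b c v.

Definition min_triplet_cover (Tc : {set {set X}}) : Prop :=
  triplet_cover Tc /\
  forall Tc' : {set {set X}}, triplet_cover Tc' -> #|Tc| <= #|Tc'|.

End Trees.

Definition mult (X : finType) (Tc : {set {set X}}) (x : X) : nat :=
  #|[set p in Tc | x \in p]|.

Definition min_mult_eq (X : finType) (Tc : {set {set X}}) (m : nat) : Prop :=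
  (forall x, m <= mult Tc x) /\ exists x, mult Tc x = m.

From mathcomp Require Import all_boot zify.
Set Implicit Arguments. Unset Strict Implicit. Unset Printing Implicit Defensive.

(* Work with the subtree spanned by a set [Y] of leaves: its interior vertices
   are the medians of triples of [Y], and its covers use pairs of [Y] only.
   If [x], [y] form a cherry with parent [v], the triple supporting [v] is
   [x y z] for some [z]. Dropping [xy] and renaming [y] into [x] turns a cover
   of [Y] into one of [Y - y] with at least two pairs fewer ([yz] merges with
   [xz]); conversely a cover of [Y - y] extends by two pairs. So minimum covers
   have [2|Y| - 3] pairs, and are called tight. Each leaf [q] lies in the two
   pairs through [q] of the triple supporting the vertex next to [q], hence
   [mu >= 2]. For a tight cover, a leaf of multiplicity two in the reduced
   cover keeps multiplicity two, since a second leaf paired with both [x] and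
   [y] would lose a third pair; and deleting a leaf of multiplicity two leaves
   a tight cover. Together these let the induction on [|Y|] find a leaf of
   multiplicity two outside any given pair of the cover. *)

Lemma bounded_ascent (A : Type) (P : A -> Prop) (f : A -> nat) (B : nat) (G : Prop) :
  (forall a, P a -> f a <= B) ->
  (forall a, P a -> G \/ exists2 b, P b & f a < f b) ->
  forall a, P a -> G.
Proof.
move=> fB step a Pa.
suff: forall k a, P a -> B - f a <= k -> G by apply; [exact: Pa | exact: leqnn].
elim=> [|k IH] {Pa}a Pa hk; case: (step a Pa) => // -[b Pb lt_ab].
  by have := fB b Pb; lia.
by apply: (IH b Pb); have := fB b Pb; lia.
Qed.

Lemma set_neq_mem (T : finType) (P Q : {set T}) a : a \notin P -> a \in Q -> P != Q.
Proof. by move=> aP aQ; apply: contraNneq aP => ->. Qed.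

Lemma set2_neq (T : finType) (q s t : T) : s != t -> q != s -> [set q; s] != [set q; t].
Proof.
move=> st qs; apply/eqP => E.
have : s \in [set q; t] by rewrite -E !inE eqxx orbT.
by rewrite !inE eq_sym (negbTE qs) (negbTE st).
Qed.

Lemma set2_mem (T : finType) (a b y : T) : a != b -> y \in [set a; b] ->
  exists2 q, q \in [set a; b] & q != y /\ [set a; b] = [set y; q].
Proof.
move=> ab; rewrite !inE => /orP[]/eqP->.
- by exists b; rewrite ?inE ?eqxx ?orbT // eq_sym.
- by exists a; rewrite ?inE ?eqxx // setUC.
Qed.

Lemma set2_eq (T : finType) (a b y q : T) : a != b -> y \in [set a; b] -> q \in [set a; b] ->
  y != q -> [set a; b] = [set y; q].
Proof.
move=> ab; rewrite !inE => /orP[]/eqP -> /orP[]/eqP -> //; rewrite ?eqxx //.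
by move=> _; rewrite setUC.
Qed.

Lemma set2_inj (T : finType) (q s t : T) : q != s -> [set q; s] = [set q; t] -> s = t.
Proof.
move=> qs E; have : s \in [set q; t] by rewrite -E !inE eqxx orbT.
by rewrite !inE eq_sym (negbTE qs) => /eqP.
Qed.

Lemma imset_collide_eq (T U : finType) (f : T -> U) (S : {set T}) a b :
  b \in S -> a != b -> f a = f b -> f @: S = f @: (S :\ a).
Proof.
move=> bS ab fab; apply/eqP; rewrite eqEsubset; apply/andP; split; last first.
  by apply: imsetS; apply: subD1set.
apply/subsetP => _ /imsetP [s sS ->].
case: (eqVneq s a) => [->|sa]; last by apply: imset_f; rewrite !inE sa.
by rewrite fab; apply: imset_f; rewrite !inE eq_sym ab.
Qed.

Lemma imset_collide_lt (T U : finType) (f : T -> U) (S : {set T}) a b :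
  a \in S -> b \in S -> a != b -> f a = f b -> #|f @: S| < #|S|.
Proof.
move=> aS bS ab fab; rewrite (imset_collide_eq bS ab fab) (cardsD1 a S) aS.
exact: leq_imset_card.
Qed.

Lemma imset_collide2 (T U : finType) (f : T -> U) (S : {set T}) a1 a2 b1 b2 :
  a1 \in S -> a2 \in S -> a1 != a2 -> b1 \in S :\ a1 :\ a2 -> b2 \in S :\ a1 :\ a2 ->
  f a1 = f b1 -> f a2 = f b2 -> #|f @: S| + 2 <= #|S|.
Proof.
move=> a1S a2S a12 b1S b2S f1 f2.
have /setD1P[_ /setD1P[b1a1 b1S0]] := b1S.
have /setD1P[b2a2 b2S1] := b2S.
have a1b1 : a1 != b1 by rewrite eq_sym.
have a2b2 : a2 != b2 by rewrite eq_sym.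
rewrite (imset_collide_eq b1S0 a1b1 f1) (imset_collide_eq b2S1 a2b2 f2).
rewrite (cardsD1 a1 S) a1S (cardsD1 a2 (S :\ a1)) in_setD1 eq_sym a12 a2S.
by rewrite add1n add1n addn2 !ltnS leq_imset_card.
Qed.

Definition merge (T : finType) (x y : T) (P : {set T}) : {set T} :=
  if y \in P then x |: (P :\ y) else P.

Lemma merge_set2 (T : finType) (x y q : T) : q != y -> merge x y [set y; q] = [set x; q].
Proof.
move=> qy; rewrite /merge !inE eqxx /=; congr (_ |: _); apply/setP => w; rewrite !inE.
by case: (eqVneq w y) => [->|wy] /=; first by rewrite eq_sym (negbTE qy).
Qed.

Lemma merge_id (T : finType) (x y : T) (P : {set T}) : y \notin P -> merge x y P = P.
Proof. by move=> yP; rewrite /merge (negbTE yP). Qed.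

Lemma mem_merge_id (T : finType) (Tc : {set {set T}}) x y P : P \in Tc -> y \notin P ->
  P \in merge x y @: (Tc :\ [set x; y]).
Proof.
move=> PT yP; rewrite -{1}(merge_id x yP); apply: imset_f.
by rewrite in_setD1 PT (set_neq_mem yP) // !inE eqxx orbT.
Qed.

Lemma mem_merge_set2 (T : finType) (Tc : {set {set T}}) (x y q : T) : x != y ->
  [set y; q] \in Tc -> q != x -> q != y -> [set x; q] \in merge x y @: (Tc :\ [set x; y]).
Proof.
move=> xy yqT qx qy; rewrite -(merge_set2 x qy); apply: imset_f.
by rewrite in_setD1 yqT (@set_neq_mem _ _ _ x) // !inE ?eqxx // negb_or xy eq_sym.
Qed.

Lemma mult_split (T : finType) (Tc : {set {set T}}) q :
  #|Tc| = #|[set P in Tc | q \notin P]| + mult Tc q.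
Proof.
rewrite /mult -(cardsID [set P : {set T} | q \in P] Tc) addnC; congr (_ + _);
  by apply: eq_card => P; rewrite !inE andbC.
Qed.

Lemma mult_filter (T : finType) (Tc : {set {set T}}) q q' :
  (forall P, P \in Tc -> q \in P -> q' \notin P) ->
  mult [set P in Tc | q \notin P] q' = mult Tc q'.
Proof.
move=> disj; apply: eq_card => P; rewrite !inE -andbA.
by case: (boolP (P \in Tc)) => //= PT; case: (boolP (q \in P)) => //= /(disj P PT) /negbTE ->.
Qed.

(** * Components of a tree minus a vertex *)

Section BinaryTree.
Variables (X V : finType) (e : rel V) (phi : X -> V).
Hypothesis e_sym : symmetric e.
Hypothesis e_irr : irreflexive e.
Hypothesis e_conn : forall x y, connect e x y.
Hypothesis e_acyc : forall s : seq V, uniq s -> 3 <= size s -> ~~ cycle e s.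

Local Notation comp := (same_comp_minus e).
Local Notation sep := (sep_at e).
Local Notation avoid v := [rel a b | e a b && (a != v) && (b != v)].

Lemma avoid_sym v : symmetric (avoid v).
Proof.
move=> a b /=; rewrite e_sym.
by case: (a != v); case: (b != v); rewrite ?andbF ?andbT.
Qed.

Lemma comp_sym v x y : comp v x y = comp v y x.
Proof. exact: (sym_connect_sym (avoid_sym v)). Qed.

Lemma comp_refl v x : comp v x x.
Proof. exact: connect0. Qed.

Lemma comp_trans v x y z : comp v x y -> comp v y z -> comp v x z.
Proof. exact: connect_trans. Qed.

Lemma comp_edge v a b : e a b -> a != v -> b != v -> comp v a b.
Proof. by move=> eab av bv; apply: connect1; rewrite /= eab av bv. Qed.

Lemma comp_centerl v y : comp v v y -> y = v.
Proof.
case/connectP => [[|a p]] /=; first by move=> _ ->.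
by rewrite eqxx andbF.
Qed.

Lemma comp_centerr v y : comp v y v -> y = v.
Proof. by rewrite comp_sym; apply: comp_centerl. Qed.

Lemma comp_nbr v x : x != v -> exists2 n, e v n & comp v x n.
Proof.
have := e_conn x v; case/connectP => p; elim: p x => [|a p IH] x /=.
  by move=> _ xv; rewrite xv eqxx.
case/andP => exa pa la xv.
case: (eqVneq a v) => [av|av].
  by exists x; [rewrite e_sym -av | exact: comp_refl].
have [n en sn] := IH a pa la av.
by exists n => //; apply: comp_trans (comp_edge exa xv av) sn.
Qed.

Lemma comp_avoid v u s t : (forall w, comp v s w -> w != u) -> comp v s t -> comp u s t.
Proof.
move=> notu /connectP [p pth ->].
suff: forall x, comp v s x -> comp u s x -> path (avoid v) x p -> comp u s (last x p).
  by apply; [exact: comp_refl | exact: comp_refl | exact: pth].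
elim: p {pth} => [|a p IH] x svx sux //=.
case/andP => /andP[/andP[exa xv] av] pa; have sva := comp_trans svx (comp_edge exa xv av).
by apply: IH pa => //; apply: comp_trans sux (comp_edge exa (notu _ svx) (notu a sva)).
Qed.

Lemma comp_nested v u s : u != v -> s != v -> ~~ comp v s u ->
  (forall t, comp v s t -> comp u s t) /\ comp u s v.
Proof.
move=> uv sv nsu.
have notu w : comp v s w -> w != u.
  by move=> sw; apply/eqP => wu; rewrite -wu sw in nsu.
split; first by move=> t; apply: comp_avoid.
have [n en sn] := comp_nbr sv.
apply: comp_trans (comp_avoid notu sn) (comp_edge _ (notu _ sn) _); first by rewrite e_sym.
by rewrite eq_sym.
Qed.

(* Otherwise [w] would join [p] and [n] by a path avoiding the edge [pn],
   closing a cycle. *)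
Lemma edge_sides_disjoint p n w : e p n -> comp n w p -> comp p w n -> False.
Proof.
move=> epn wp wn.
pose e' := [rel a b | e a b && ~~ (((a == p) && (b == n)) || ((a == n) && (b == p)))].
have e'_sym : symmetric e'.
  move=> a b /=; rewrite e_sym; congr (_ && ~~ _).
  by case: (a == p); case: (b == n); case: (a == n); case: (b == p).
have avoid_sub v : v \in [:: p; n] -> subrel (avoid v) (connect e').
  rewrite !inE => /orP[]/eqP -> a b /andP[/andP[eab av] bv];
  apply: connect1; rewrite /= eab /=; apply/negP => /orP[]/andP[/eqP ea /eqP eb];
  by move: av bv; rewrite ?ea ?eb eqxx.
have c1 : connect e' w p by apply: (connect_sub (avoid_sub n _)); rewrite ?inE ?eqxx ?orbT.
have c2 : connect e' w n by apply: (connect_sub (avoid_sub p _)); rewrite ?inE ?eqxx.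
have : connect e' n p by apply: connect_trans c1; rewrite (sym_connect_sym e'_sym).
case/connectP => q pq lq; move: lq; case: (shortenP pq) => q' pq' uq' _ lq.
have lq' : last n q' = p by rewrite lq.
have pn : p != n by apply/eqP => pn; move: epn; rewrite pn e_irr.
suff [size_q cycle_q] : 3 <= size (n :: q') /\ cycle e (n :: q').
  by move: (e_acyc uq' size_q); rewrite cycle_q.
clear lq; case: q' pq' uq' lq' => [|a [|b q'']].
- by move=> _ _ /= np; rewrite np eqxx in pn.
- by move=> H _ la; move: H; rewrite /= in la; rewrite la /= !eqxx andbT orbT andbF.
move=> pth _ lst; split => //.
change (path e n (rcons (a :: b :: q'') n)).
rewrite rcons_path (sub_path _ pth) /=; last by move=> x y /andP[].
by move: lst => /= ->.
Qed.

Lemma nbrs_not_comp v n1 n2 : e v n1 -> e v n2 -> n1 != n2 -> ~~ comp v n1 n2.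
Proof.
move=> e1 e2 n12; apply/negP => h; apply: (@edge_sides_disjoint v n1 n2 e1).
  apply: comp_edge; first by rewrite e_sym.
    by rewrite eq_sym.
  by apply/eqP => E; move: e1; rewrite E e_irr.
by rewrite comp_sym.
Qed.

Lemma sep_atC v s t : sep v s t = sep v t s.
Proof. by rewrite /sep_at comp_sym andbCA. Qed.

Lemma sep_at_neqr v s t : sep v s t -> t != v.
Proof. by case/and3P. Qed.

Lemma sep_at_neql v s t : sep v s t -> s != v.
Proof. by case/and3P. Qed.

Lemma sep_at_neq v s t : sep v s t -> s != t.
Proof. by case/and3P => _ _; apply: contra => /eqP ->; apply: comp_refl. Qed.

Lemma sep_at_comp v s t s' : sep v s t -> comp v s s' -> s' != v -> sep v s' t.
Proof.
case/and3P => sv tv nst ss' s'v; rewrite /sep_at s'v tv /=.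
by apply: contra nst; apply: comp_trans.
Qed.

Lemma sep_at_comp_disjoint v s t w : sep v s t -> comp v s w -> comp v t w -> False.
Proof.
case/and3P => _ _ /negP nst sw tw; apply: nst.
by apply: comp_trans sw _; rewrite comp_sym.
Qed.

Lemma sep_at_nbrs v n1 n2 s t : e v n1 -> e v n2 -> n1 != n2 ->
  comp v n1 s -> comp v n2 t -> sep v s t.
Proof.
move=> e1 e2 n12 s1 t2.
have notv n x : e v n -> comp v n x -> x != v.
  by move=> en nx; apply/eqP => xv; rewrite xv in nx; move: en; rewrite (comp_centerr nx) e_irr.
rewrite /sep_at (notv _ _ e1 s1) (notv _ _ e2 t2) /=.
apply: contra (nbrs_not_comp e1 e2 n12) => st.
by apply: comp_trans s1 _; apply: comp_trans st _; rewrite comp_sym.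
Qed.

Definition sep3 v a b c := [/\ sep v a b, sep v a c & sep v b c].

Lemma sep3_12 v a b c : sep3 v a b c -> sep3 v b a c.
Proof. by case=> h1 h2 h3; split => //; rewrite sep_atC. Qed.

Lemma sep3_23 v a b c : sep3 v a b c -> sep3 v a c b.
Proof. by case=> h1 h2 h3; split => //; rewrite sep_atC. Qed.

Lemma sep4_deg v a b c d : sep3 v a b c -> sep v a d -> sep v b d -> sep v c d ->
  4 <= deg e v.
Proof.
move=> [hab hac hbc] had hbd hcd.
have [na ea sa] := comp_nbr (sep_at_neql hab).
have [nb eb sb] := comp_nbr (sep_at_neql hbc).
have [nc ec sc] := comp_nbr (sep_at_neql hcd).
have [nd ed sd] := comp_nbr (sep_at_neqr hcd).
have nbr_neq s t ns nt : sep v s t -> comp v s ns -> comp v t nt -> ns != nt.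
  move=> st sns tnt; apply/eqP => E; rewrite -E in tnt.
  exact: (sep_at_comp_disjoint st sns tnt).
have : uniq [:: na; nb; nc; nd].
  rewrite /= !inE !negb_or (nbr_neq _ _ _ _ hab sa sb) (nbr_neq _ _ _ _ hac sa sc).
  rewrite (nbr_neq _ _ _ _ had sa sd) (nbr_neq _ _ _ _ hbc sb sc).
  by rewrite (nbr_neq _ _ _ _ hbd sb sd) (nbr_neq _ _ _ _ hcd sc sd).
move/card_uniqP => /= <-; apply: subset_leq_card; apply/subsetP => y.
by rewrite !inE => /or4P[] /eqP ->.
Qed.

Lemma sep3_comp v a b c s : deg e v <= 3 -> sep3 v a b c -> s != v ->
  [|| comp v s a, comp v s b | comp v s c].
Proof.
move=> dv abc sv; apply/negPn/negP; rewrite !negb_or => /and3P[nsa nsb nsc].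
case: (abc) => hab hac hbc.
have sep_s t : t != v -> ~~ comp v s t -> sep v t s.
  by move=> tv nst; rewrite sep_atC /sep_at sv tv nst.
have := sep4_deg abc (sep_s a (sep_at_neql hab) nsa) (sep_s b (sep_at_neqr hab) nsb)
  (sep_s c (sep_at_neqr hac) nsc).
by rewrite leqNgt ltnS dv.
Qed.

(* A second center [p] lies in the component of at most one of [a], [b], [c]
   in [T - u]. *)
Lemma sep3_center_uniq u p a b c : sep3 u a b c -> sep3 p a b c -> u = p.
Proof.
move=> [uab uac ubc] [pab pac pbc]; apply/eqP/negPn/negP => up.
have pu : p != u by rewrite eq_sym.
have key s t : sep u s t -> sep p s t -> ~~ comp u s p -> ~~ comp u t p -> False.
  move=> ust /sep_at_comp_disjoint pst sp tp.
  have [_ h1] := comp_nested pu (sep_at_neql ust) sp.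
  have [_ h2] := comp_nested pu (sep_at_neqr ust) tp.
  by apply: pst h1 h2.
case: (boolP (comp u a p)) => hap.
  have hbp : ~~ comp u b p by apply/negP => /(sep_at_comp_disjoint uab hap).
  have hcp : ~~ comp u c p by apply/negP => /(sep_at_comp_disjoint uac hap).
  exact: (key b c).
case: (boolP (comp u b p)) => hbp.
  have hcp : ~~ comp u c p by apply/negP => /(sep_at_comp_disjoint ubc hbp).
  exact: (key a c).
exact: (key a b).
Qed.

Definition comp_set v s := [set t | comp v s t].

Lemma comp_set_lt v u s : u != v -> s != v -> ~~ comp v s u ->
  #|comp_set v s| < #|comp_set u s|.
Proof.
move=> uv sv nsu; have [sub h] := comp_nested uv sv nsu.
apply: proper_card; apply/properP; split.
  by apply/subsetP => t; rewrite !inE; apply: sub.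
exists v; first by rewrite inE.
by rewrite inE; apply/negP => /comp_centerr E; rewrite E eqxx in sv.
Qed.

(** * Leaves, medians and cherries *)

Hypothesis phi_inj : injective phi.
Hypothesis leaf_deg : forall v, (deg e v == 1) = (v \in codom phi).
Hypothesis interior_deg : forall v, v \notin codom phi -> deg e v = 3.

Lemma deg_le3 v : deg e v <= 3.
Proof.
case: (boolP (v \in codom phi)) => [|/interior_deg -> //].
by rewrite -leaf_deg => /eqP ->.
Qed.

Lemma leaf_unique_nbr v : v \in codom phi -> exists m, forall y, e v y = (y == m).
Proof.
rewrite -leaf_deg /deg => /cards1P [m Hm]; exists m => y.
by rewrite -in_set1 -Hm inE.
Qed.

Lemma leaf_comp v m s t : (forall y, e v y = (y == m)) -> s != v -> t != v -> comp v s t.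
Proof.
move=> Hm sv tv; have [n1 en1 s1] := comp_nbr sv; have [n2 en2 s2] := comp_nbr tv.
rewrite Hm in en1; rewrite Hm in en2; move/eqP: en1 => en1; move/eqP: en2 => en2.
by subst; apply: comp_trans s1 _; rewrite comp_sym.
Qed.

Lemma sep_at_interior v s t : sep v s t -> v \notin codom phi.
Proof.
case/and3P => sv tv nst; apply/negP => /leaf_unique_nbr [m Hm].
by rewrite (leaf_comp Hm sv tv) in nst.
Qed.

Lemma leaf_comp_isolated v m t : (forall y, e v y = (y == m)) -> comp m v t -> t = v.
Proof.
move=> Hm /connectP [[|a p]] /=; first by move=> _ ->.
by rewrite Hm => /andP[/andP[/andP[/eqP -> _]]]; rewrite eqxx.
Qed.

Lemma leaf_nbr_interior q m : 2 < #|X| -> (forall y, e (phi q) y = (y == m)) ->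
  m \notin codom phi.
Proof.
move=> X3 Hm; apply/negP => /leaf_unique_nbr [m' Hm'].
have m'q : m' = phi q by apply/eqP; rewrite eq_sym -Hm' e_sym Hm.
rewrite m'q in Hm'.
have two_vertices t : t \in [set phi q; m].
  rewrite !inE; case: (eqVneq t m) => [|tm]; first by rewrite orbT.
  have [n en sn] := comp_nbr tm; rewrite Hm' in en; rewrite (eqP en) in sn.
  by rewrite orbF; apply/eqP; apply: (leaf_comp_isolated Hm); rewrite comp_sym.
have : #|codom phi| <= #|[set phi q; m]|.
  by apply: subset_leq_card; apply/subsetP => t _; apply: two_vertices.
by rewrite (card_codom phi_inj) cards2; case: (_ != _); lia.
Qed.

(* Such [p] lie on the path from [q] to the subtree spanned by the rest of [Y]. *)
Definition isolating (Y : {set X}) q p :=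
  forall w, w \in Y -> w != q -> sep p (phi q) (phi w).

Lemma leaf_nbr_isolating (Y : {set X}) q m : 2 < #|X| -> (forall y, e (phi q) y = (y == m)) ->
  isolating Y q m.
Proof.
move=> X3 Hm w _ wq.
have qm : phi q != m by apply/eqP => E; move: (Hm m); rewrite eqxx -{1}E e_irr.
have m_int := leaf_nbr_interior X3 Hm.
rewrite /sep_at qm /=; apply/andP; split.
  by apply: contraNneq m_int => <-; apply: codom_f.
by apply/negP => /(leaf_comp_isolated Hm) /phi_inj E; rewrite E eqxx in wq.
Qed.

Lemma isolating_step (Y : {set X}) q p w1 w2 : isolating Y q p ->
  w1 \in Y -> w2 \in Y -> w1 != q -> w2 != q -> w1 != w2 ->
  (forall w, w \in Y -> w != q -> comp p (phi w1) (phi w)) ->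
  exists2 n, isolating Y q n & #|comp_set p (phi q)| < #|comp_set n (phi q)|.
Proof.
move=> iso_p w1Y w2Y w1q w2q w12 same.
have pq : phi q != p := sep_at_neql (iso_p w1 w1Y w1q).
have [n en sn] := comp_nbr (sep_at_neqr (iso_p w1 w1Y w1q)).
have np : n != p by apply/eqP => E; move: en; rewrite E e_irr.
have nsq : ~~ comp p (phi q) n.
  by apply/negP => /(sep_at_comp_disjoint (iso_p w1 w1Y w1q)); apply.
have [_ hp] := comp_nested np pq nsq.
exists n; last exact: comp_set_lt np pq nsq.
move=> w wY wq.
have swn : comp p (phi w) n by apply: comp_trans _ sn; rewrite comp_sym; apply: same.
apply/and3P; split.
- by apply/eqP => E; move: nsq; rewrite -E comp_refl.
- apply/eqP => wn.
  have [m' Hm'] := leaf_unique_nbr (codom_f phi w); rewrite wn in Hm'.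
  have m'p : m' = p by apply/eqP; rewrite eq_sym -Hm' e_sym.
  rewrite m'p in Hm'.
  have e1 : phi w1 = n by apply: (leaf_comp_isolated Hm'); rewrite comp_sym.
  have e2 : phi w2 = n.
    by apply: (leaf_comp_isolated Hm'); apply: comp_trans _ (same _ w2Y w2q); rewrite comp_sym.
  by move: w12; rewrite -(inj_eq phi_inj) e1 e2 eqxx.
- apply/negP => h.
  have h1 : comp n (phi w) p by apply: comp_trans hp; rewrite comp_sym.
  exact: (edge_sides_disjoint en h1 swn).
Qed.

Lemma leaf_attachment (Y : {set X}) q : q \in Y -> 2 < #|Y| -> exists p w1 w2,
  isolating Y q p /\ [/\ w1 \in Y, w2 \in Y & sep3 p (phi q) (phi w1) (phi w2)].
Proof.
move=> qY Y3.
have /card_gt1P[w1 [w2 [/setD1P[w1q w1Y] /setD1P[w2q w2Y] w12]]] : 1 < #|Y :\ q|.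
  by rewrite (cardsD1 q) qY in Y3.
have [m Hm] := leaf_unique_nbr (codom_f phi q).
have iso_m := @leaf_nbr_isolating Y q m (leq_trans Y3 (max_card _)) Hm.
apply: (@bounded_ascent V (isolating Y q) (fun p => #|comp_set p (phi q)|) #|V| _ _ _ m iso_m).
  by move=> p _; apply: max_card.
move=> p iso_p.
case: (boolP [exists w, (w \in Y :\ q) && ~~ comp p (phi w1) (phi w)]).
  case/existsP => w /andP[/setD1P[wq wY] nw]; left; exists p, w1, w.
  do 2!split=> //; split; [exact: iso_p | exact: iso_p |].
  by rewrite /sep_at nw (sep_at_neqr (iso_p _ w1Y w1q)) (sep_at_neqr (iso_p _ wY wq)).
rewrite negb_exists => /forallP none; right.
apply: (isolating_step iso_p w1Y w2Y w1q w2q w12) => w wY wq.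
by move: (none w); rewrite !inE wq wY negbK.
Qed.

Lemma median_exists a b c : a != b -> a != c -> b != c ->
  exists p, sep3 p (phi a) (phi b) (phi c).
Proof.
move=> ab ac bc.
have abcY : a \in [set a; b; c] by rewrite !inE eqxx.
have [|p [w1 [w2 [_ [w1Y w2Y abc]]]]] := leaf_attachment abcY.
  by apply/card_gt2P; exists a, b, c; rewrite !inE !eqxx ?orbT /= [c == a]eq_sym ab ac bc.
case: abc => s1 s2 s3; exists p.
have [/eqP n1 /eqP n2 /eqP n3] := And3 (sep_at_neq s1) (sep_at_neq s2) (sep_at_neq s3).
move: w1Y w2Y s1 s2 s3 n1 n2 n3; rewrite !inE -!orbA.
by case/or3P=> /eqP-> ; case/or3P=> /eqP-> => s1 s2 s3 n1 n2 n3 //; apply: sep3_23.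
Qed.

Lemma nbr_comp_leaf v n : e v n -> exists x, comp v n (phi x).
Proof.
move=> evn.
pose P t := t != v /\ comp v n t.
have nv : n != v by apply/eqP => E; move: evn; rewrite E e_irr.
apply: (@bounded_ascent V P (fun t => #|comp_set t v|) #|V| _ _ _ n (conj nv (comp_refl _ _))).
  by move=> t _; apply: max_card.
move=> t [tv nt].
case: (boolP (t \in codom phi)) => [/codomP [x tx]|t_int]; first by left; exists x; rewrite -tx.
right.
have away m : e t m -> ~~ comp t m v -> exists2 b, P b & #|comp_set t v| < #|comp_set b v|.
  move=> etm mv.
  have mt : m != t by apply/eqP => E; move: etm; rewrite E e_irr.
  have m_v : m != v by apply/eqP => E; move: mv; rewrite E comp_refl.
  exists m; first by split => //; apply: comp_trans nt (comp_edge etm tv m_v).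
  by apply: comp_set_lt => //; [rewrite eq_sym | rewrite comp_sym].
have /card_gt1P [m1 [m2 []]] : 1 < #|[set y | e t y]|.
  by have := interior_deg t_int; rewrite /deg => ->.
rewrite !inE => e1 e2 m12.
have : ~~ comp t m1 v || ~~ comp t m2 v.
  rewrite -negb_and; apply: contra (nbrs_not_comp e1 e2 m12) => /andP[s1 s2].
  by apply: comp_trans s1 _; rewrite comp_sym.
by case/orP => hm; [apply: (away m1) | apply: (away m2)].
Qed.

Lemma interior_sep3 v : v \notin codom phi ->
  exists a b c, sep3 v (phi a) (phi b) (phi c).
Proof.
move=> v_int; have /card_gt2P [n1 [n2 [n3 []]]] : 2 < #|[set y | e v y]|.
  by have := interior_deg v_int; rewrite /deg => ->.
rewrite !inE => -[e1 e2 e3] [n12 n23 n31].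
have [x1 s1] := nbr_comp_leaf e1; have [x2 s2] := nbr_comp_leaf e2.
have [x3 s3] := nbr_comp_leaf e3.
exists x1, x2, x3; split.
- exact: (sep_at_nbrs e1 e2 n12 s1 s2).
- by apply: (sep_at_nbrs e1 e3 _ s1 s3); rewrite eq_sym.
- exact: (sep_at_nbrs e2 e3 n23 s2 s3).
Qed.

Lemma sep_at_leaf_neq v a b : sep v (phi a) (phi b) -> a != b.
Proof. by move/sep_at_neq; apply: contraNneq => ->. Qed.

Lemma sep3_extend v a b c s : sep3 v a b c -> s != v ->
  exists b' c', [/\ b' \in [:: a; b; c], c' \in [:: a; b; c] & sep3 v s b' c'].
Proof.
move=> abc sv; case: (abc) => hab hac hbc.
have sep_from t u : sep v t u -> comp v t s -> sep v s u.
  by move=> tu ts; apply: sep_at_comp tu ts sv.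
case/or3P: (sep3_comp (deg_le3 v) abc sv); rewrite comp_sym => hs.
- by exists b, c; rewrite !inE !eqxx ?orbT; split=> //; split=> //; apply: sep_from hs.
- exists a, c; rewrite !inE !eqxx ?orbT; split=> //.
  by split=> //; apply: sep_from hs; rewrite // sep_atC.
- exists a, b; rewrite !inE !eqxx ?orbT; split=> //.
  by split=> //; apply: sep_from hs; rewrite sep_atC.
Qed.

Lemma seq3_sub (Y : {set X}) a b c : a \in Y -> b \in Y -> c \in Y -> {subset [:: a; b; c] <= Y}.
Proof. by move=> aY bY cY z; rewrite !inE => /or3P[]/eqP ->. Qed.

Lemma isolatingVcomp (Y : {set X}) q p : phi q != p -> p \notin codom phi ->
  isolating Y q p \/ exists w, [/\ w \in Y, w != q & comp p (phi q) (phi w)].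
Proof.
move=> qp p_int.
case: (boolP [forall w in Y, (w != q) ==> sep p (phi q) (phi w)]) => [/forallP iso|].
  by left => w wY wq; have := iso w; rewrite wY wq.
rewrite negb_forall => /existsP [w]; rewrite negb_imply negb_imply => /and3P[wY wq nsep].
right; exists w; split=> //; apply/negPn; apply: contra nsep => nc.
by rewrite /sep_at qp nc andbT; apply: contraNneq p_int => <-; apply: codom_f.
Qed.

(* As [p] has degree three, [phi q] lies in the component of a corner, so it is
   that corner. *)
Lemma isolating_sep3_mem (Y : {set X}) q p a b c : isolating Y q p ->
  a \in Y -> b \in Y -> c \in Y -> sep3 p (phi a) (phi b) (phi c) -> q \in [:: a; b; c].
Proof.
move=> iso aY bY cY abc; apply/negPn/negP; rewrite !inE !negb_or => /and3P[qa qb qc].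
have far w : w \in Y -> q != w -> ~~ comp p (phi q) (phi w).
  by move=> wY; rewrite eq_sym => /(iso w wY) /and3P[].
have qp : phi q != p by apply: sep_at_neql (iso a aY _); rewrite eq_sym.
case/or3P: (sep3_comp (deg_le3 p) abc qp) => h.
- by move: (far a aY qa); rewrite h.
- by move: (far b bY qb); rewrite h.
- by move: (far c cY qc); rewrite h.
Qed.

(* The medians of [Y] are the interior vertices of the subtree spanned by [Y]. *)
Definition median_in (Y : {set X}) v :=
  exists a b c, [/\ a \in Y, b \in Y, c \in Y & sep3 v (phi a) (phi b) (phi c)].

Lemma median_in_interior Y v : median_in Y v -> v \notin codom phi.
Proof. by case=> a [b [c [_ _ _ [h _ _]]]]; apply: sep_at_interior h. Qed.

Lemma median_in_sub (Y Z : {set X}) v : Z \subset Y -> median_in Z v -> median_in Y v.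
Proof.
move=> /subsetP ZY [a [b [c [aZ bZ cZ abc]]]].
by exists a, b, c; split => //; apply: ZY.
Qed.

Lemma isolating_not_median (Y : {set X}) q p : isolating Y q p -> ~ median_in (Y :\ q) p.
Proof.
move=> iso [a [b [c [/setD1P[aq aY] /setD1P[bq bY] /setD1P[cq cY] abc]]]].
have := isolating_sep3_mem iso aY bY cY abc.
by rewrite !inE !(eq_sym q) (negbTE aq) (negbTE bq) (negbTE cq).
Qed.

Lemma leaf_neq_median Y v x : median_in Y v -> phi x != v.
Proof. by move/median_in_interior; apply: contraNneq => <-; apply: codom_f. Qed.

Lemma median_sep3_extend Y v a : median_in Y v -> exists b c,
  [/\ b \in Y, c \in Y & sep3 v (phi a) (phi b) (phi c)].
Proof.
move=> vY; have [a1 [b1 [c1 [aY bY cY abc]]]] := vY.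
have [b' [c' [hb hc s]]] := sep3_extend abc (leaf_neq_median a vY).
have sub := seq3_sub aY bY cY.
have /mapP[b /sub bY' Eb] : b' \in map phi [:: a1; b1; c1] := hb.
have /mapP[c /sub cY' Ec] : c' \in map phi [:: a1; b1; c1] := hc.
by exists b, c; rewrite -Eb -Ec.
Qed.

(* Every other median [u] lies away from [z]: otherwise all of [Y] but [z]
   would lie in one component of [T - u]. *)
Lemma isolating_median_far (Y : {set X}) z v u : isolating Y z v ->
  median_in Y u -> u != v -> ~~ comp v (phi z) u.
Proof.
move=> iso uY uv; apply/negP => zu.
have in_v w : w \in Y -> w != z -> comp u (phi w) v.
  move=> wY wz; have zw := iso w wY wz.
  have nwu : ~~ comp v (phi w) u by apply/negP => /(sep_at_comp_disjoint zw zu).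
  by have [_] := comp_nested uv (sep_at_neqr zw) nwu.
have together s t : sep u (phi s) (phi t) -> s \in Y -> t \in Y -> s != z -> t != z -> False.
  by move=> st sY tY sz tz; apply: (sep_at_comp_disjoint st (in_v s sY sz) (in_v t tY tz)).
case: uY => a [b [c [aY bY cY [sab sac sbc]]]].
have [ab ac bc] := And3 (sep_at_leaf_neq sab) (sep_at_leaf_neq sac) (sep_at_leaf_neq sbc).
case: (eqVneq a z) => [az|az]; first by subst z; apply: (together b c); rewrite // eq_sym.
case: (eqVneq b z) => [bz|bz]; first by subst z; apply: (together a c); rewrite // eq_sym.
exact: (together a b).
Qed.

Lemma isolated_pair_together (Y : {set X}) x y v u : isolating Y x v -> isolating Y y v ->
  x \in Y -> y \in Y -> x != y -> median_in Y u -> u != v -> comp u (phi x) (phi y).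
Proof.
move=> isox isoy xY yY xy uY uv.
have xv : phi x != v by apply: sep_at_neql (isox y yY _); rewrite eq_sym.
have yv : phi y != v by apply: sep_at_neql (isoy x xY xy).
have [_ hx] := comp_nested uv xv (isolating_median_far isox uY uv).
have [_ hy] := comp_nested uv yv (isolating_median_far isoy uY uv).
by apply: comp_trans hx _; rewrite comp_sym.
Qed.

Lemma median_grow (Y : {set X}) v a z w : median_in Y v -> a \in Y -> z \in Y -> w \in Y ->
  z != w -> sep v (phi a) (phi z) -> comp v (phi z) (phi w) ->
  exists2 p, median_in Y p & #|comp_set v (phi a)| < #|comp_set p (phi a)|.
Proof.
move=> vY aY zY wY zw az zw_comp.
have aw : a != w.
  by apply/eqP => E; subst w; case/and3P: az => _ _; rewrite comp_sym zw_comp.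
have [p [pa pz pw]] := median_exists (sep_at_leaf_neq az) aw zw.
have pv : p != v by apply/eqP => E; move: pw; rewrite E => /and3P[_ _]; rewrite zw_comp.
exists p; first by exists a, z, w.
apply: comp_set_lt => //; first exact: leaf_neq_median vY.
apply/negP => hap.
have nzp : ~~ comp v (phi z) p by apply/negP => /(sep_at_comp_disjoint az hap).
have [sub _] := comp_nested pv (sep_at_neqr az) nzp.
by move: pw => /and3P[_ _]; rewrite sub.
Qed.

(* [x] and [y] form a cherry of the subtree spanned by [Y], with parent [v]. *)
Definition cherry (Y : {set X}) x y v :=
  [/\ x \in Y, y \in Y, x != y & median_in Y v] /\
  [/\ isolating Y x v, isolating Y y v &
      forall u, median_in Y u -> u != v -> comp u (phi x) (phi y)].

Lemma cherry_exists (Y : {set X}) : 2 < #|Y| -> exists x y v, cherry Y x y v.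
Proof.
case/card_gt2P => a0 [b0 [c0 [[a0Y b0Y c0Y] [ab0 bc0 ca0]]]].
have [v0 s0] : exists v0, sep3 v0 (phi a0) (phi b0) (phi c0).
  by apply: median_exists; rewrite // eq_sym.
pose P (va : V * X) := median_in Y va.1 /\ va.2 \in Y.
have P0 : P (v0, a0) by split => //; exists a0, b0, c0.
apply: (@bounded_ascent _ P (fun va => #|comp_set va.1 (phi va.2)|) #|V| _ _ _ _ P0).
  by move=> va _; apply: max_card.
move=> [v a] [/= vY aY].
have [b [c [bY cY [sab sac sbc]]]] := median_sep3_extend a vY.
have v_int := median_in_interior vY.
case: (isolatingVcomp Y (leaf_neq_median b vY) v_int) => [isob|[w [wY wb bw]]]; last first.
  right; have [|p pY lt] := median_grow vY aY bY wY _ sab bw; first by rewrite eq_sym.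
  by exists (p, a).
case: (isolatingVcomp Y (leaf_neq_median c vY) v_int) => [isoc|[w [wY wc cw]]]; last first.
  right; have [|p pY lt] := median_grow vY aY cY wY _ sac cw; first by rewrite eq_sym.
  by exists (p, a).
left; exists b, c, v; split; first by split => //; apply: sep_at_leaf_neq sbc.
split => // u uY uv.
exact: (isolated_pair_together isob isoc bY cY (sep_at_leaf_neq sbc) uY uv).
Qed.

(** * Covers of the subtree spanned by a set of leaves *)

Lemma supportsP (Tc : {set {set X}}) a b c v : reflect
  (sep3 v (phi a) (phi b) (phi c) /\
   [/\ [set a; b] \in Tc, [set a; c] \in Tc & [set b; c] \in Tc])
  (supports e phi Tc a b c v).
Proof.
apply: (iffP idP).
  by case/and5P => h1 h2 h3 h4 /andP[h5 h6].
by case=> [[h1 h2 h3] [h4 h5 h6]]; apply/and5P; split => //; apply/andP.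
Qed.

Lemma supports_sep3 (Tc : {set {set X}}) a b c v :
  supports e phi Tc a b c v -> sep3 v (phi a) (phi b) (phi c).
Proof. by case/supportsP. Qed.

Lemma supports_sub (Tc1 Tc2 : {set {set X}}) a b c v : Tc1 \subset Tc2 ->
  supports e phi Tc1 a b c v -> supports e phi Tc2 a b c v.
Proof.
move=> /subsetP sub /supportsP [abc [h1 h2 h3]]; apply/supportsP; split => //.
by split; apply: sub.
Qed.

Lemma supports_first (Tc : {set {set X}}) a b c v x :
  supports e phi Tc a b c v -> x \in [:: a; b; c] -> exists b' c',
    [/\ supports e phi Tc x b' c' v, b' \in [:: a; b; c] & c' \in [:: a; b; c]].
Proof.
move=> /supportsP [abc [h1 h2 h3]]; rewrite !inE => /or3P[]/eqP ->.
- by exists b, c; rewrite !inE !eqxx ?orbT; split=> //; apply/supportsP.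
- exists a, c; rewrite !inE !eqxx ?orbT; split=> //; apply/supportsP.
  by split; [apply: sep3_12 | rewrite setUC].
- exists a, b; rewrite !inE !eqxx ?orbT; split=> //; apply/supportsP.
  by split; [apply/sep3_12/sep3_23 | rewrite setUC [[set c; b]]setUC].
Qed.

Definition pairs_in (Y : {set X}) (Tc : {set {set X}}) :=
  forall p, p \in Tc -> exists a b, [/\ a \in Y, b \in Y, a != b & p = [set a; b]].

(* A triplet cover of the subtree spanned by [Y]. *)
Definition cover_on (Y : {set X}) Tc := pairs_in Y Tc /\
  forall v, median_in Y v ->
    exists a b c, [/\ a \in Y, b \in Y, c \in Y & supports e phi Tc a b c v].

Lemma cover_on_isolating (Y : {set X}) (Tc : {set {set X}}) q :
  cover_on Y Tc -> q \in Y -> 2 < #|Y| -> exists p s t,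
    [/\ s \in Y, t \in Y, supports e phi Tc q s t p & isolating Y q p].
Proof.
move=> [_ cov] qY Y3.
have [p [w1 [w2 [iso [w1Y w2Y qw]]]]] := leaf_attachment qY Y3.
have [|a [b [c [aY bY cY abc]]]] := cov p; first by exists q, w1, w2.
have sub := seq3_sub aY bY cY.
have qin := isolating_sep3_mem iso aY bY cY (supports_sep3 abc).
have [s [t [qst sin tin]]] := supports_first abc qin.
by exists p, s, t; split => //; apply: sub.
Qed.

Lemma cover_on_mult_ge2 (Y : {set X}) (Tc : {set {set X}}) q :
  cover_on Y Tc -> q \in Y -> 2 < #|Y| -> 1 < mult Tc q.
Proof.
move=> cov qY Y3.
have [p [s [t [_ _ /supportsP[[sqs sqt sst] [qs_in qt_in _]] _]]]] := cover_on_isolating cov qY Y3.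
have : #|[set [set q; s]; [set q; t]]| <= mult Tc q.
  apply: subset_leq_card; apply/subsetP => P; rewrite !inE.
  by case/orP => /eqP ->; rewrite ?qs_in ?qt_in !inE eqxx.
by rewrite cards2 (set2_neq (sep_at_leaf_neq sst) (sep_at_leaf_neq sqs)).
Qed.

(** * The size of minimum covers *)

Section Reduction.
Variables (Y : {set X}) (Tc : {set {set X}}) (x y : X) (v : V).
Hypothesis xy_cherry : cherry Y x y v.
Hypothesis Tc_cover : cover_on Y Tc.

Local Notation reduced := (merge x y @: (Tc :\ [set x; y])).

(* Both [x] and [y] occur in any triple supporting [v]. *)
Lemma cherry_triangle : exists z, [/\ z \in Y, z != x, z != y &
  [/\ [set x; y] \in Tc, [set x; z] \in Tc & [set y; z] \in Tc]].
Proof.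
case: xy_cherry => [[xY yY xy vY] [isox isoy _]].
have [a [b [c [aY bY cY abc]]]] := Tc_cover.2 v vY.
have sub := seq3_sub aY bY cY.
have xin := isolating_sep3_mem isox aY bY cY (supports_sep3 abc).
have [b' [c' [xbc /sub b'Y /sub c'Y]]] := supports_first abc xin.
have := isolating_sep3_mem isoy xY b'Y c'Y (supports_sep3 xbc).
rewrite !inE eq_sym (negbTE xy) /=.
case/supportsP: xbc => [[s1 s2 s3] [p1 p2 p3]].
case/orP => /eqP E.
- rewrite -E in s3 p1 p3; exists c'; split => //.
  + by rewrite eq_sym; apply: sep_at_leaf_neq s2.
  + by rewrite eq_sym; apply: sep_at_leaf_neq s3.
- rewrite -E in s3 p2 p3; exists b'; split => //.
  + by rewrite eq_sym; apply: sep_at_leaf_neq s1.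
  + exact: sep_at_leaf_neq s3.
  + by split => //; rewrite setUC.
Qed.

Lemma reduced_card : #|reduced| + 2 <= #|Tc|.
Proof.
case: xy_cherry => [[_ _ xy _] _].
have [z [_ zx zy [pxy pxz pyz]]] := cherry_triangle.
have [yx yz] : y != x /\ y != z by rewrite eq_sym xy eq_sym.
have y_xz : y \notin [set x; z] by rewrite !inE negb_or yx yz.
have x_yz : x \notin [set y; z] by rewrite !inE negb_or xy eq_sym zx.
have yz_in : [set y; z] \in Tc :\ [set x; y].
  by rewrite in_setD1 pyz andbT (set_neq_mem x_yz) // !inE eqxx.
have xz_in : [set x; z] \in Tc :\ [set x; y].
  by rewrite in_setD1 pxz andbT (set_neq_mem y_xz) // !inE eqxx orbT.
have merge_yz : merge x y [set y; z] = merge x y [set x; z].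
  by rewrite merge_set2 // merge_id.
have yz_xz : [set y; z] != [set x; z] by rewrite eq_sym (set_neq_mem y_xz) // !inE eqxx.
have := imset_collide_lt yz_in xz_in yz_xz merge_yz.
by rewrite [#|Tc|](cardsD1 [set x; y]) pxy addn2.
Qed.

Lemma reduced_pairs : pairs_in (Y :\ y) reduced.
Proof.
case: xy_cherry => [[xY _ xy _] _].
move=> _ /imsetP [P /setD1P [Pxy PT] ->].
have [a [b [aY bY ab EP]]] := Tc_cover.1 P PT; subst P.
have in_Y w : w \in [set a; b] -> w \in Y by rewrite !inE => /orP[]/eqP->.
case: (boolP (y \in [set a; b])) => [yab|yab]; last first.
  rewrite merge_id //; exists a, b; split => //; rewrite in_setD1 ?aY ?bY andbT.
  - by apply: contraNneq yab => <-; rewrite !inE eqxx.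
  - by apply: contraNneq yab => <-; rewrite !inE eqxx orbT.
have [q /in_Y qY [qy Eab]] := set2_mem ab yab.
rewrite Eab merge_set2 //; exists x, q; rewrite !in_setD1 xy xY qy qY; split => //.
by apply: contraNneq Pxy => xq; rewrite Eab -xq setUC.
Qed.

Lemma reduced_supports u : median_in (Y :\ y) u -> exists a b c,
  [/\ a \in Y :\ y, b \in Y :\ y, c \in Y :\ y & supports e phi reduced a b c u].
Proof.
case: xy_cherry => [[xY yY xy vY] [_ isoy together]] uY'.
have uY := median_in_sub (subD1set Y y) uY'.
have uv : u != v by apply: contra_not_neq (isolating_not_median isoy) => <-.
have [a [b [c [aY bY cY abc]]]] := Tc_cover.2 u uY.
have sub := seq3_sub aY bY cY.
case: (boolP (y \in [:: a; b; c])) => [yin|]; last first.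
  rewrite !inE !negb_or !(eq_sym y) => /and3P[ay b_y cy].
  exists a, b, c; rewrite !in_setD1 ay b_y cy aY bY cY; split => //.
  case/supportsP: abc => [abc [p1 p2 p3]]; apply/supportsP; split => //.
  by split; apply: mem_merge_id; rewrite // !inE negb_or !(eq_sym y) ?ay ?b_y ?cy.
have [b' [c' [ybc /sub b'Y /sub c'Y]]] := supports_first abc yin.
case/supportsP: ybc => [[s1 s2 s3] [p1 p2 p3]].
have yx : comp u (phi y) (phi x) by rewrite comp_sym; apply: together.
have xu : phi x != u := leaf_neq_median x uY.
have s1' := sep_at_comp s1 yx xu; have s2' := sep_at_comp s2 yx xu.
have [b'y c'y] : b' != y /\ c' != y.
  by rewrite !(eq_sym _ y) (sep_at_leaf_neq s1) (sep_at_leaf_neq s2).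
have [b'x c'x] : b' != x /\ c' != x.
  by rewrite !(eq_sym _ x) (sep_at_leaf_neq s1') (sep_at_leaf_neq s2').
exists x, b', c'; rewrite !in_setD1 xy xY b'y b'Y c'y c'Y; split => //.
apply/supportsP; split; first by split.
split; [exact: mem_merge_set2 | exact: mem_merge_set2 |].
by apply: mem_merge_id; rewrite // !inE negb_or !(eq_sym y) b'y c'y.
Qed.

Lemma reduced_cover : cover_on (Y :\ y) reduced.
Proof. exact: (conj reduced_pairs reduced_supports). Qed.

Lemma median_in_delete u : median_in Y u -> u != v -> median_in (Y :\ y) u.
Proof.
case: xy_cherry => [[xY yY xy vY] [_ _ together]] uY uv.
have [b [c [bY cY [xb xc bc]]]] := median_sep3_extend x uY.
have xy_u := together u uY uv.
have not_y w : sep u (phi x) (phi w) -> w != y.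
  by apply: contraTneq => ->; rewrite /sep_at xy_u !andbF.
by exists x, b, c; rewrite !in_setD1 xy xY (not_y b xb) (not_y c xc) bY cY.
Qed.

Lemma cover_on_extend Tc' : 2 < #|Y :\ y| -> cover_on (Y :\ y) Tc' ->
  exists2 Tc, cover_on Y Tc & #|Tc| <= #|Tc'| + 2.
Proof.
case: (xy_cherry) => [[xY yY xy vY] [isox isoy _]] Y3 cov'.
have xY' : x \in Y :\ y by rewrite in_setD1 xy xY.
have [p [s [t [/setD1P[sy sY] _ /supportsP[[xs _ _] [xsT _ _]] _]]]] :=
  cover_on_isolating cov' xY' Y3.
have sx : s != x by rewrite eq_sym (sep_at_leaf_neq xs).
exists ([set x; y] |: ([set y; s] |: Tc')); last by rewrite !cardsU1; lia.
split.
  move=> P; rewrite !in_setU1 => /or3P[/eqP-> | /eqP-> | PT].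
  - by exists x, y.
  - by exists y, s; rewrite eq_sym.
  - have [a [b [/setD1P[_ aY] /setD1P[_ bY] ab ->]]] := cov'.1 P PT.
    by exists a, b.
move=> u uY; case: (eqVneq u v) => [->|uv].
  exists x, y, s; split => //; apply/supportsP; split.
    by split; [apply: isox | apply: isox | apply: isoy]; rewrite // eq_sym.
  by split; rewrite !in_setU1 ?eqxx ?xsT ?orbT.
have [a [b [c [/setD1P[_ aY] /setD1P[_ bY] /setD1P[_ cY] abc]]]] :=
  cov'.2 u (median_in_delete uY uv).
exists a, b, c; split => //; apply: supports_sub abc.
by apply/subsetP => P PT; rewrite !in_setU1 PT !orbT.
Qed.

End Reduction.

Lemma median_in_exists (Y : {set X}) : 2 < #|Y| -> exists v, median_in Y v.
Proof.
case/card_gt2P => a [b [c [[aY bY cY] [ab bc ca]]]].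
have [|v abc] := @median_exists a b c ab _ bc; first by rewrite eq_sym.
by exists v, a, b, c.
Qed.

Lemma supports_card (Tc : {set {set X}}) a b c v : supports e phi Tc a b c v -> 3 <= #|Tc|.
Proof.
case/supportsP => [[sab sac sbc] [p1 p2 p3]].
have [ab ac bc] := And3 (sep_at_leaf_neq sab) (sep_at_leaf_neq sac) (sep_at_leaf_neq sbc).
have : uniq [:: [set a; b]; [set a; c]; [set b; c]].
  have a_bc : a \notin [set b; c] by rewrite !inE negb_or ab ac.
  rewrite /= !inE !negb_or set2_neq // andbT ![_ == [set b; c]]eq_sym.
  by rewrite !(set_neq_mem a_bc) // !inE eqxx.
move/card_uniqP => /= <-; apply: subset_leq_card; apply/subsetP => P.
by rewrite !inE => /or3P[] /eqP ->.
Qed.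

Lemma cover_on_card_ge n (Y : {set X}) Tc : #|Y| = n.+3 -> cover_on Y Tc ->
  2 * #|Y| <= #|Tc| + 3.
Proof.
elim: n Y Tc => [|n IH] Y Tc Yn cov.
  have [|v vY] := median_in_exists (Y := Y); first by rewrite Yn.
  have [a [b [c [_ _ _ abc]]]] := cov.2 v vY.
  by have := supports_card abc; rewrite Yn; lia.
have [|x [y [v xy_cherry]]] := cherry_exists (Y := Y); first by rewrite Yn.
have yY : y \in Y by case: xy_cherry => [[]].
have Yn' : #|Y :\ y| = n.+3 by move: Yn; rewrite (cardsD1 y) yY => -[].
have := IH _ _ Yn' (reduced_cover xy_cherry cov).
have := reduced_card xy_cherry cov; rewrite Yn Yn'.
by move: #|_ @: _| => r; lia.
Qed.

Definition all_pairs (Y : {set X}) := [set P : {set X} | P \subset Y & #|P| == 2].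

Lemma all_pairs_cover (Y : {set X}) : cover_on Y (all_pairs Y).
Proof.
have pair_in a b : a \in Y -> b \in Y -> a != b -> [set a; b] \in all_pairs Y.
  move=> aY bY ab; rewrite inE cards2 ab eqxx andbT.
  by apply/subsetP => w; rewrite !inE => /orP[]/eqP->.
split.
  move=> P; rewrite inE => /andP[/subsetP PY /cards2P [a [b [ab EP]]]].
  by exists a, b; rewrite EP in PY *; rewrite !PY ?inE ?eqxx ?orbT.
move=> v [a [b [c [aY bY cY abc]]]]; exists a, b, c; split => //.
case: (abc) => sab sac sbc; apply/supportsP; split => //.
by split; apply: pair_in => //; apply: sep_at_leaf_neq; eassumption.
Qed.

Lemma cover_on_exists n (Y : {set X}) : #|Y| = n.+3 ->
  exists2 Tc, cover_on Y Tc & #|Tc| + 3 <= 2 * #|Y|.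
Proof.
elim: n Y => [|n IH] Y Yn.
  exists (all_pairs Y); first exact: all_pairs_cover.
  by rewrite cards_draws Yn.
have [|x [y [v xy_cherry]]] := cherry_exists (Y := Y); first by rewrite Yn.
have yY : y \in Y by case: xy_cherry => [[]].
have Yn' : #|Y :\ y| = n.+3 by move: Yn; rewrite (cardsD1 y) yY => -[].
have [Tc' cov' size'] := IH _ Yn'.
have Y3 : 2 < #|Y :\ y| by rewrite Yn'.
have [Tc cov size] := cover_on_extend xy_cherry Y3 cov'.
by exists Tc; rewrite // Yn; rewrite Yn' in size'; lia.
Qed.

(** * Leaves of multiplicity two *)

Definition tight (Y : {set X}) Tc := cover_on Y Tc /\ #|Tc| + 3 = 2 * #|Y|.

Definition mult2_avoiding (Y : {set X}) (Tc : {set {set X}}) :=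
  forall b c, [set b; c] \in Tc -> exists q, [/\ q \in Y, q != b, q != c & mult Tc q = 2].

Section TightReduction.
Variables (Y : {set X}) (Tc : {set {set X}}) (x y z : X) (v : V).
Hypothesis xy_cherry : cherry Y x y v.
Hypothesis Tc_tight : tight Y Tc.
Hypothesis Y4 : 3 < #|Y|.
Hypothesis triangle : [/\ z \in Y, z != x, z != y &
  [/\ [set x; y] \in Tc, [set x; z] \in Tc & [set y; z] \in Tc]].

Local Notation reduced := (merge x y @: (Tc :\ [set x; y])).

Lemma reduced_tight : tight (Y :\ y) reduced.
Proof.
have yY : y \in Y by case: xy_cherry => [[]].
have Yy : #|Y| = #|Y :\ y|.+1 by rewrite (cardsD1 y) yY.
have cov := reduced_cover xy_cherry Tc_tight.1.
split => //.
have Yn : #|Y :\ y| = (#|Y| - 4).+3 by lia.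
have := cover_on_card_ge Yn cov; have := reduced_card xy_cherry Tc_tight.1.
by move: Tc_tight.2; rewrite Yy; move: #|_ @: _| => r; lia.
Qed.

Lemma reduced_card_lt q : q != z -> q != x -> q != y ->
  [set y; q] \in Tc -> [set x; q] \in Tc -> #|reduced| + 3 <= #|Tc|.
Proof.
case: triangle => _ zx zy [pxy pxz pyz] qz qx qy pyq pxq.
case: xy_cherry => [[_ _ xy _] _].
have yx : y != x by rewrite eq_sym.
have facts w : w != x -> w != y -> [/\ y \notin [set x; w], x \notin [set y; w] &
    merge x y [set y; w] = merge x y [set x; w]].
  move=> wx wy; rewrite merge_set2 // merge_id; last by rewrite !inE negb_or yx eq_sym.
  by rewrite !inE !negb_or yx xy !(eq_sym _ w) wx wy.
have [y_xz x_yz mz] := facts z zx zy; have [y_xq x_yq mq] := facts q qx qy.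
have inS P a : P \in Tc -> a \notin P -> a \in [set x; y] -> P \in Tc :\ [set x; y].
  by move=> PT aP axy; rewrite in_setD1 PT (set_neq_mem aP axy).
have [xy_x xy_y] : x \in [set x; y] /\ y \in [set x; y] by rewrite !inE !eqxx orbT.
have yz_yq : [set y; z] != [set y; q].
  by apply: contra_neq qz => /set2_inj ->; rewrite // eq_sym.
have [yz_y yq_y] : y \in [set y; z] /\ y \in [set y; q] by rewrite !inE !eqxx.
have xzS : [set x; z] \in Tc :\ [set x; y] :\ [set y; z] :\ [set y; q].
  by rewrite !in_setD1 !(set_neq_mem y_xz) // (inS _ _ pxz y_xz xy_y).
have xqS : [set x; q] \in Tc :\ [set x; y] :\ [set y; z] :\ [set y; q].
  by rewrite !in_setD1 !(set_neq_mem y_xq) // (inS _ _ pxq y_xq xy_y).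
have := imset_collide2 (inS _ _ pyz x_yz xy_x) (inS _ _ pyq x_yq xy_x) yz_yq xzS xqS mz mq.
have cT : #|Tc| = #|Tc :\ [set x; y]|.+1 by rewrite (cardsD1 [set x; y] Tc) pxy.
by move=> collide; rewrite cT addn3 ltnS -addn2.
Qed.

(* A second leaf [q] adjacent in [Tc] to both [x] and [y] would make the
   reduction lose one more pair, below the lower bound. *)
Lemma no_second_triangle q : q != z -> q != x -> q != y ->
  [set y; q] \in Tc -> [set x; q] \in Tc -> False.
Proof.
move=> qz qx qy pyq pxq; have := reduced_card_lt qz qx qy pyq pxq.
have yY : y \in Y by case: xy_cherry => [[]].
have Yy : #|Y| = #|Y :\ y|.+1 by rewrite (cardsD1 y) yY.
have := reduced_tight.2; have := Tc_tight.2; rewrite Yy.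
by move: #|_ @: _| => r; lia.
Qed.

Lemma reduced_mult q : q != x -> q != y -> q != z -> mult Tc q <= mult reduced q.
Proof.
move=> qx qy qz.
set D := [set P in Tc | q \in P].
have DS P : P \in D -> P \in Tc :\ [set x; y].
  rewrite !inE => /andP[PT qP]; rewrite PT andbT.
  by apply: contraTneq qP => ->; rewrite !inE negb_or qx qy.
have Dy P : P \in D -> y \in P -> P = [set y; q].
  rewrite inE => /andP[PT qP] yP; have [a [b [_ _ ab EP]]] := Tc_tight.1.1 P PT.
  by rewrite EP in yP qP *; apply: set2_eq; rewrite // eq_sym.
have merge_inj : {in D &, injective (merge x y)}.
  have yqD : [set y; q] \in D -> [set x; q] \in D -> False.
    by rewrite !inE => /andP[pyq _] /andP[pxq _]; apply: (no_second_triangle qz qx qy).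
  move=> P1 P2 D1 D2; case: (boolP (y \in P1)) => y1; case: (boolP (y \in P2)) => y2.
  - by rewrite (Dy _ D1 y1) (Dy _ D2 y2).
  - rewrite (Dy _ D1 y1) merge_set2 // (merge_id x y2) => E.
    by case: yqD; [rewrite -(Dy _ D1 y1) | rewrite E].
  - rewrite (Dy _ D2 y2) merge_set2 // (merge_id x y1) => E.
    by case: yqD; [rewrite -(Dy _ D2 y2) | rewrite -E].
  - by rewrite (merge_id x y1) (merge_id x y2).
rewrite /mult -/D -(card_in_imset merge_inj); apply: subset_leq_card.
apply/subsetP => _ /imsetP [P PD ->]; rewrite inE imset_f ?DS //=.
case: (boolP (y \in P)) => yP; first by rewrite (Dy _ PD yP) merge_set2 // !inE eqxx orbT.
by rewrite merge_id //; case/setIdP: PD.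
Qed.

Lemma reduced_mult2 q : q \in Y -> q != x -> q != y -> q != z ->
  mult reduced q = 2 -> mult Tc q = 2.
Proof.
move=> qY qx qy qz m2; apply/eqP; rewrite eqn_leq -{1}m2 reduced_mult //=.
exact: cover_on_mult_ge2 Tc_tight.1 qY (ltnW Y4).
Qed.

End TightReduction.

Lemma mult2_pairs (Y : {set X}) Tc q : cover_on Y Tc -> q \in Y -> 2 < #|Y| ->
  mult Tc q = 2 -> exists p s t, [/\ supports e phi Tc q s t p, isolating Y q p &
    [set P in Tc | q \in P] = [set [set q; s]; [set q; t]]].
Proof.
move=> cov qY Y3 m2.
have [p [s [t [_ _ qst iso]]]] := cover_on_isolating cov qY Y3.
exists p, s, t; split => //.
case/supportsP: qst => [[sqs _ sst] [ps pt _]].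
apply/eqP; rewrite eq_sym eqEcard cards2 (set2_neq (sep_at_leaf_neq sst) (sep_at_leaf_neq sqs)).
have -> : #|[set P in Tc | q \in P]| = 2 := m2.
by rewrite andbT; apply/subsetP => P; rewrite !inE => /orP[]/eqP->; rewrite ?ps ?pt !inE eqxx.
Qed.

(* Deleting a leaf [q] of multiplicity two: the only median whose supports
   involve [q] is the vertex [p] isolating it, which is no median of [Y :\ q]. *)
Lemma delete_cover (Y : {set X}) Tc q p s t : cover_on Y Tc ->
  supports e phi Tc q s t p -> isolating Y q p ->
  [set P in Tc | q \in P] = [set [set q; s]; [set q; t]] ->
  cover_on (Y :\ q) [set P in Tc | q \notin P].
Proof.
move=> cov qst iso Eq; split.
  move=> P; rewrite inE => /andP[PT qP].
  have [a [b [aY bY ab EP]]] := cov.1 P PT.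
  have /andP[aq bq] : (a != q) && (b != q) by rewrite EP !inE negb_or !(eq_sym q) in qP.
  by exists a, b; rewrite !in_setD1 aq bq aY bY.
move=> u uY'; have [a [b [c [aY bY cY abc]]]] := cov.2 u (median_in_sub (subD1set Y q) uY').
case: (boolP (q \in [:: a; b; c])) => [qin|]; last first.
  rewrite !inE !negb_or !(eq_sym q) => /and3P[aq bq cq].
  exists a, b, c; rewrite !in_setD1 aq bq cq aY bY cY; split => //.
  case/supportsP: abc => [abc [p1 p2 p3]]; apply/supportsP; split => //.
  by split; rewrite inE ?p1 ?p2 ?p3 !inE negb_or !(eq_sym q) ?aq ?bq ?cq.
have [b' [c' [/supportsP[[u1 u2 u3] [p1 p2 _]] _ _]]] := supports_first abc qin.
have at_q w : [set q; w] \in Tc -> q != w -> w = s \/ w = t.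
  move=> qwT qw; have : [set q; w] \in [set P in Tc | q \in P] by rewrite inE qwT !inE eqxx.
  by rewrite Eq !inE => /orP[]/eqP/set2_inj E; [left | right]; apply: E.
have [Eb Ec] := (at_q _ p1 (sep_at_leaf_neq u1), at_q _ p2 (sep_at_leaf_neq u2)).
have qst' : sep3 u (phi q) (phi s) (phi t).
  have n3 := sep_at_leaf_neq u3; move: n3 u1 u2 u3.
  by case: Eb => ->; case: Ec => ->; rewrite ?eqxx // => _ *; apply: sep3_23.
have up : u = p := sep3_center_uniq qst' (supports_sep3 qst).
by case: (isolating_not_median iso); rewrite -up.
Qed.

Lemma pairs_in_set2 (Y : {set X}) Tc b c : pairs_in Y Tc -> [set b; c] \in Tc ->
  [/\ b \in Y, c \in Y & b != c].
Proof.
move=> pairs bcT; have [a' [b' [aY bY ab E]]] := pairs _ bcT.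
have in_Y w : w \in [set b; c] -> w \in Y by rewrite E !inE => /orP[]/eqP->.
split; [apply: in_Y | apply: in_Y | ]; rewrite ?inE ?eqxx ?orbT //.
apply: contra_eqN (congr1 (fun A : {set X} => #|A|) E) => /eqP->.
by rewrite setUid cards1 cards2 ab.
Qed.

Lemma tight_mult2_base (Y : {set X}) Tc : #|Y| = 3 -> tight Y Tc -> mult2_avoiding Y Tc.
Proof.
move=> Y3 [cov size] b c bcT.
have [bY cY bc] := pairs_in_set2 cov.1 bcT.
have /card_gt0P [q /setD1P[qc /setD1P[qb qY]]] : 0 < #|Y :\ b :\ c|.
  have cb : c != b by rewrite eq_sym.
  by move: Y3; rewrite (cardsD1 b) bY (cardsD1 c) in_setD1 cb cY add1n add1n => -[->].
exists q; split => //; apply/eqP; rewrite eqn_leq (cover_on_mult_ge2 cov qY) ?Y3 // andbT.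
have : #|Tc :\ [set b; c]| = 2.
  by move: size; rewrite (cardsD1 [set b; c]) bcT Y3 add1n addn3 => -[].
move=> <-; apply: subset_leq_card; apply/subsetP => P; rewrite !inE => /andP[PT qP].
by rewrite PT andbT; apply: contraTneq qP => ->; rewrite !inE negb_or qb qc.
Qed.

Lemma tight_mult2_exists (Y : {set X}) Tc : 3 < #|Y| -> tight Y Tc ->
  (forall y Tc', y \in Y -> tight (Y :\ y) Tc' -> mult2_avoiding (Y :\ y) Tc') ->
  exists2 q, q \in Y & mult Tc q = 2.
Proof.
move=> Y4 tc IH.
have [x [y [v xy_cherry]]] := cherry_exists (ltnW Y4).
have [[xY yY xy _] _] := xy_cherry.
have [z triangle] := cherry_triangle xy_cherry tc.1.
have [zY zx zy [_ xzT _]] := triangle.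
have xz_red : [set x; z] \in merge x y @: (Tc :\ [set x; y]).
  by apply: mem_merge_id xzT _; rewrite !inE negb_or eq_sym xy eq_sym zy.
have [q [/setD1P[qy qY] qx qz mq]] :=
  IH y _ yY (reduced_tight xy_cherry tc Y4 triangle) x z xz_red.
by exists q => //; apply: (reduced_mult2 xy_cherry tc Y4 triangle).
Qed.

Lemma tight_mult2_avoid (Y : {set X}) Tc q0 o : 3 < #|Y| -> tight Y Tc ->
  (forall y Tc', y \in Y -> tight (Y :\ y) Tc' -> mult2_avoiding (Y :\ y) Tc') ->
  q0 \in Y -> mult Tc q0 = 2 -> [set q0; o] \in Tc ->
  exists q, [/\ q \in Y, q != q0, q != o & mult Tc q = 2].
Proof.
move=> Y4 [cov size] IH q0Y m0 q0oT.
have [p [s [t [qst iso Eq]]]] := mult2_pairs cov q0Y (ltnW Y4) m0.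
have cov2 := delete_cover cov qst iso Eq.
have size2 : #|[set P in Tc | q0 \notin P]| + 3 = 2 * #|Y :\ q0|.
  by move: size; rewrite (mult_split Tc q0) m0 (cardsD1 q0 Y) q0Y; clear; lia.
case/supportsP: qst => [[sqs sqt sst] [_ _ stT]].
have st2 : [set s; t] \in [set P in Tc | q0 \notin P].
  by rewrite inE stT !inE negb_or (sep_at_leaf_neq sqs) (sep_at_leaf_neq sqt).
have [q [/setD1P[qq0 qY] qs qt m2]] := IH q0 _ q0Y (conj cov2 size2) s t st2.
have at_q0 P : P \in Tc -> q0 \in P -> P = [set q0; s] \/ P = [set q0; t].
  move=> PT q0P; have : P \in [set P in Tc | q0 \in P] by rewrite inE PT q0P.
  by rewrite Eq !inE => /orP[]/eqP->; [left | right].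
have [_ _ q0o] := pairs_in_set2 cov.1 q0oT.
exists q; split => //.
  have q0_in : q0 \in [set q0; o] by rewrite !inE eqxx.
  by case: (at_q0 _ q0oT q0_in) => /(set2_inj q0o) ->.
rewrite -(@mult_filter _ _ q0) // => P PT q0P.
by case: (at_q0 P PT q0P) => ->; rewrite !inE negb_or ?qq0 ?qs ?qt.
Qed.

Lemma tight_mult2 n (Y : {set X}) Tc : #|Y| = n.+3 -> tight Y Tc -> mult2_avoiding Y Tc.
Proof.
elim: n Y Tc => [|n IH] Y Tc Yn tc; first exact: tight_mult2_base.
have Y4 : 3 < #|Y| by rewrite Yn.
have IH' y Tc' : y \in Y -> tight (Y :\ y) Tc' -> mult2_avoiding (Y :\ y) Tc'.
  by move=> yY; apply: IH; move: Yn; rewrite (cardsD1 y) yY add1n => -[].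
have [q0 q0Y m0] := tight_mult2_exists Y4 tc IH'.
move=> b c bcT.
case: (eqVneq q0 b) => [q0b|q0b].
  by subst q0; apply: tight_mult2_avoid Y4 tc IH' q0Y m0 bcT.
case: (eqVneq q0 c) => [q0c|q0c]; last by exists q0.
subst q0; rewrite setUC in bcT.
by have [q [qY qc qb mq]] := tight_mult2_avoid Y4 tc IH' q0Y m0 bcT; exists q.
Qed.

Lemma triplet_cover_setT Tc : triplet_cover e phi Tc <-> cover_on [set: X] Tc.
Proof.
split=> [[pairs supp] | [pairs supp]]; split.
- move=> P PT; have /cards2P [a [b [ab ->]]] : #|P| == 2 by rewrite pairs.
  by exists a, b; rewrite !inE.
- move=> v /median_in_interior /supp [a [b [c abc]]].
  by exists a, b, c; rewrite !inE.
- by move=> P /pairs [a [b [_ _ ab ->]]]; rewrite cards2 ab.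
- move=> v /interior_sep3 [a [b [c abc]]].
  have [|a' [b' [c' [_ _ _ H]]]] := supp v; first by exists a, b, c; rewrite !inE.
  by exists a', b', c'.
Qed.

Lemma min_triplet_cover_mult2 Tc : 2 < #|X| -> min_triplet_cover e phi Tc -> min_mult_eq Tc 2.
Proof.
move=> X3 [/triplet_cover_setT cov Tc_min].
have Xn : #|[set: X]| = (#|X| - 3).+3 by rewrite cardsT; lia.
have [T0 /[dup] cov0 /triplet_cover_setT /Tc_min le_T0 size0] := cover_on_exists Xn.
have tc : tight [set: X] Tc.
  split => //; apply/eqP; rewrite eqn_leq (cover_on_card_ge Xn cov) andbT.
  by apply: leq_trans size0; rewrite leq_add2r.
have /card_gt0P [P PT] : 0 < #|Tc| by move: tc.2; rewrite Xn; lia.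
have [a [b [_ _ _ EP]]] := cov.1 P PT; rewrite EP in PT.
have [q [_ _ _ mq]] := tight_mult2 Xn tc PT.
split; last by exists q.
by move=> x; apply: (cover_on_mult_ge2 cov); rewrite ?inE ?cardsT.
Qed.

End BinaryTree.

Unset Implicit Arguments.

Theorem corollary2 (X V : finType) (e : rel V) (phi : X -> V)
    (Tc : {set {set X}}) :
  3 <= #|X| ->
  binary_Xtree e phi ->
  min_triplet_cover e phi Tc ->
  min_mult_eq Tc 2.
Proof.
move=> X3 [[e_sym [e_irr [e_conn e_acyc]]] [phi_inj [leaf_deg interior_deg]]].
exact: min_triplet_cover_mult2.
Qed.
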